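(* Let $h \in \mathbb{R}[t]$ satisfy $h(t) \geq 1$ for $t \geq 0$ and $h(t)\ge 0$ for all $t \in \mathbb{R}$, and let $H(x_1, \ldots, x_d) = \prod_{j=1}^d h(x_j)$. For $\mathcal{I} \subseteq \{1,\dots,d\}$ let $H_{\mathcal{I}}(x) = H(\sigma_{\mathcal{I}}x)$, where $\sigma_{\mathcal{I}}$ changes the sign of the coordinates $x_k$, $k\in\mathcal{I}$. Assume $\mu$ is an admissible measure on $\mathbb{R}^d$ which is indeterminate. Then there exist $a \in \mathbb{R}^d$ and a constant $\gamma_a >0$ such that $$\sum_{\mathcal{I} \subseteq \{1, \ldots, d \}} \int H_\mathcal{I}(x-a)\, d\mu(x) \;\geq\; \mu(\mathbb{R}^d) + \gamma_a .$$
   Context: An admissible measure on $\mathbb{R}^d$ is a positive Radon measure $\mu$ such that $\int |p|\,d\mu<\infty$ for every polynomial $p$. $\mu$ is indeterminate if there is an admissible measure on $\mathbb{R}^d$, distinct from $\mu$, giving the same integral to every polynomial. The sum is over all subsets, including the empty set. *)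

From HB Require Import structures.
From mathcomp Require Import all_boot all_order all_algebra.
From mathcomp Require Import all_classical all_reals all_analysis.
From mathcomp Require mpoly.

Set Implicit Arguments.
Unset Strict Implicit.
Unset Printing Implicit Defensive.

Import Order.TTheory GRing.Theory Num.Theory.
Local Open Scope classical_set_scope.
Local Open Scope ring_scope.

(* R^d is modelled as d.-tuple R with the product (= Borel) sigma-algebra
   generated by the coordinate maps; R carries its Borel sigma-algebra. *)

Definition peval {R : realType} {d : nat} (p : mpoly.mpoly d R)
  (x : d.-tuple R) : R := mpoly.meval (fun i => tnth x i) p.

(* admissible: positive measure, every polynomial is integrable
   (so in particular the measure is finite, hence Radon) *)
Definition admissible {R : realType} {d : nat}
  (mu : {measure set (d.-tuple R) -> \bar R}) : Prop :=
  forall p : mpoly.mpoly d R,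
    mu.-integrable setT (fun x => (peval p x)%:E).

Definition indeterminate {R : realType} {d : nat}
  (mu : {measure set (d.-tuple R) -> \bar R}) : Prop :=
  exists nu : {measure set (d.-tuple R) -> \bar R},
    admissible nu /\
    ~ (forall A, measurable A -> nu A = mu A) /\
    forall p : mpoly.mpoly d R,
      (\int[nu]_x (peval p x)%:E = \int[mu]_x (peval p x)%:E)%E.

Definition HI {R : realType} {d : nat} (h : {poly R}) (I : {set 'I_d})
  (y : 'I_d -> R) : R :=
  \prod_(j < d) h.[(if j \in I then -1 else 1) * y j].

From HB Require Import structures.
From mathcomp Require Import all_boot all_order all_algebra.
From mathcomp Require Import all_classical all_reals all_analysis.
From mathcomp Require mpoly.
From mathcomp Require Import lra measurable_realfun.

Set Implicit Arguments.
Unset Strict Implicit.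
Unset Printing Implicit Defensive.

Import Order.TTheory GRing.Theory Num.Theory.
Local Open Scope classical_set_scope.
Local Open Scope ring_scope.

(* Writing y = x - a, the sum over all sign patterns factorises:
     sum_I H_I(y) = prod_j (h(y_j) + h(-y_j)).
   Every factor is >= 1 (one of y_j, -y_j is nonnegative), so the sum is at
   least h(y_0) + h(-y_0) = 1 + g(y_0), where g(t) = h(t) + h(-t) - 1 is a
   nonnegative polynomial, nonzero since g(0) = 2 h(0) - 1 >= 1.
   A nonzero polynomial cannot vanish at size g + 1 distinct points, so the
   shifts t |-> g(t - k), k <= size g, have an everywhere positive sum; hence,
   as soon as mu has positive mass, one of the integrals of g(x_0 - k) is
   positive and the shift a = (k, ..., k) works with gamma that integral.
   Indeterminacy enters only through two degenerate cases it excludes: a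
   null measure, and dimension d = 0 (a measure on a point is determined by
   its mass, i.e. by the integral of the constant polynomial 1). *)

Lemma poly_shift_nonroot (R : numDomainType) (p : {poly R}) (t : R) :
  p != 0 -> exists k : 'I_(size p).+1, ~~ root p (t - k%:R).
Proof.
move=> p_neq0; apply: contrapT => no_nonroot.
have all_roots (k : 'I_(size p).+1) : root p (t - k%:R).
  by apply: contrapT => /negP not_root; apply: no_nonroot; exists k.
pose shifts := [seq t - k%:R | k <- iota 0 (size p).+1].
have shifts_uniq : uniq shifts.
  rewrite map_inj_uniq ?iota_uniq // => i j /eqP.
  by move=> /eqP /addrI /oppr_inj /eqP; rewrite eqr_nat => /eqP.
have shifts_roots : all (root p) shifts.
  apply/allP => x /mapP [k]; rewrite mem_iota add0n => /andP [_ lt_k] ->.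
  exact: all_roots (Ordinal lt_k).
have := max_poly_roots p_neq0 shifts_roots shifts_uniq.
by rewrite size_map size_iota ltnNge leqnSn.
Qed.

Lemma sum_shifts_gt0 (R : numDomainType) (p : {poly R}) (t : R) :
  p != 0 -> (forall s, 0 <= p.[s]) ->
  0 < \sum_(k < (size p).+1) p.[t - k%:R].
Proof.
move=> p_neq0 p_ge0; rewrite lt_def sumr_ge0 ?andbT //.
have [k /negP not_root] := poly_shift_nonroot t p_neq0.
apply/eqP => /psumr_eq0P sum0; apply: not_root; apply/eqP.
exact: sum0.
Qed.

Section SymmetricDefect.
Variables (R : realType) (h : {poly R}).
Hypothesis h_ge1 : forall t : R, 0 <= t -> 1 <= h.[t].
Hypothesis h_ge0 : forall t : R, 0 <= h.[t].

Definition sym_defect : {poly R} := h + (h \Po (- 'X)) - 1.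

Lemma sym_defectE t : sym_defect.[t] = h.[t] + h.[- t] - 1.
Proof. by rewrite /sym_defect !hornerE horner_comp !hornerE. Qed.

(* One of t, -t is nonnegative, so h(t) + h(-t) >= 1. *)
Lemma sym_ge1 t : 1 <= h.[t] + h.[- t].
Proof.
have [t_ge0|t_lt0] := leP 0 t; first by rewrite -[1]addr0 lerD ?h_ge1.
by rewrite -[1]add0r lerD ?h_ge1 // oppr_ge0 ltW.
Qed.

Lemma sym_defect_ge0 t : 0 <= sym_defect.[t].
Proof. by rewrite sym_defectE subr_ge0 sym_ge1. Qed.

Lemma sym_defect_neq0 : sym_defect != 0.
Proof.
apply/eqP => g0; have := sym_defectE 0.
by rewrite g0 horner0 oppr0; have := h_ge1 (lexx 0); lra.
Qed.

End SymmetricDefect.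

Lemma sum_subsets_prod (R : comNzRingType) (d : nat) (F : 'I_d -> bool -> R) :
  \sum_(I : {set 'I_d}) \prod_(j < d) F j (j \in I) =
  \prod_(j < d) (F j true + F j false).
Proof.
transitivity (\prod_(j < d) \sum_(b : bool) F j b); last first.
  by apply: eq_bigr => j _; rewrite big_bool.
rewrite bigA_distr_bigA /=.
rewrite (reindex (fun f : {ffun 'I_d -> bool} => finset (fun j => f j))) /=.
  by apply: eq_bigr => f _; apply: eq_bigr => j _; rewrite inE.
exists (fun I : {set 'I_d} => [ffun j => j \in I]) => f _.
  by apply/ffunP => j; rewrite ffunE inE.
by apply/setP => j; rewrite inE ffunE.
Qed.

Lemma HI_sum (R : realType) (d : nat) (h : {poly R}) (y : 'I_d -> R) :
  \sum_(I : {set 'I_d}) HI h I y = \prod_(j < d) (h.[y j] + h.[- y j]).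
Proof.
rewrite [LHS](sum_subsets_prod (fun j b => h.[(if b then -1 else 1) * y j])).
by apply: eq_bigr => j _; rewrite mulN1r mul1r addrC.
Qed.

Lemma HI_sum_ge (R : realType) (d : nat) (h : {poly R})
    (h_ge1 : forall t : R, 0 <= t -> 1 <= h.[t])
    (h_ge0 : forall t : R, 0 <= h.[t]) (y : 'I_d.+1 -> R) :
  1 + (sym_defect h).[y ord0] <= \sum_(I : {set 'I_d.+1}) HI h I y.
Proof.
rewrite HI_sum big_ord_recl sym_defectE addrC subrK.
apply: ler_peMr; first exact: le_trans ler01 (sym_ge1 h_ge1 h_ge0 _).
apply: (big_ind (fun r : R => 1 <= r)) => //; first exact: mulr_ege1.
by move=> j _; exact: sym_ge1.
Qed.

Lemma exists_integral_gt0 (dT : measure_display) (T : measurableType dT)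
    (R : realType) (mu : {measure set T -> \bar R}) (n : nat)
    (f : 'I_n -> T -> R) :
  mu setT != 0%E -> (forall k, measurable_fun setT (f k)) ->
  (forall k x, 0 <= f k x) -> (forall x, 0 < \sum_(k < n) f k x) ->
  exists k, (0 < \int[mu]_x (f k x)%:E)%E.
Proof.
move=> mu_neq0 f_meas f_ge0 sum_gt0; apply: contrapT => no_pos.
have int0 k : (\int[mu]_x (f k x)%:E = 0)%E.
  apply/eqP; rewrite eq_le integral_ge0 ?andbT => [|x _]; last first.
    by rewrite lee_fin.
  by rewrite leNgt; apply/negP => pos; apply: no_pos; exists k.
have fE_meas k : measurable_fun setT (fun x => (f k x)%:E).
  exact/measurable_EFinP.
have fE_ge0 k x : setT x -> (0 <= (f k x)%:E)%E by rewrite lee_fin.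
have sum_meas : measurable_fun setT (fun x => \sum_(k < n) (f k x)%:E)%E.
  exact: emeasurable_sum.
have sum_ge0 x : (0 <= \sum_(k < n) (f k x)%:E)%E.
  by rewrite sume_ge0 // => k _; rewrite lee_fin.
have : (\int[mu]_x `|\sum_(k < n) (f k x)%:E| = 0)%E.
  under eq_integral => x _ do rewrite (gee0_abs (sum_ge0 x)).
  by rewrite ge0_integral_sum // big1 // => k _; exact: int0.
move=> /(ae_eq_integral_abs _ measurableT sum_meas) [N [mN muN0 sub_N]].
move/eqP: mu_neq0; apply; apply/eqP; rewrite -measure_le0 -muN0.
rewrite le_measure ?inE // => x _; apply: sub_N => /= /(_ I) /eqP.
by rewrite sumEFin eqe gt_eqF.
Qed.

Lemma positive_lower_bound (R : realType) (J : \bar R) : (0 < J)%E ->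
  exists gamma : R, 0 < gamma /\ (gamma%:E <= J)%E.
Proof.
case: J => [r| |] //; first by rewrite lte_fin => r_gt0; exists r.
by move=> _; exists 1; rewrite ltr01 leey.
Qed.

(* The alternative measure witnessing indeterminacy has the same total mass
   (both integrate the constant polynomial 1) but differs on some set. *)
Lemma indeterminate_same_mass (R : realType) (d : nat)
    (mu : {measure set (d.-tuple R) -> \bar R}) :
  indeterminate mu -> exists nu : {measure set (d.-tuple R) -> \bar R},
    nu setT = mu setT /\ ~ (forall A, measurable A -> nu A = mu A).
Proof.
move=> [nu [_ [nu_neq same_int]]]; exists nu; split => //.
have := same_int (mpoly.mpolyC _ 1); rewrite /peval.
under eq_integral do rewrite mpoly.mevalC.
under [X in _ = X -> _]eq_integral do rewrite mpoly.mevalC.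
by rewrite !integral_cst // !mul1e.
Qed.

Lemma indeterminate_mass_neq0 (R : realType) (d : nat)
    (mu : {measure set (d.-tuple R) -> \bar R}) :
  indeterminate mu -> mu setT != 0%E.
Proof.
move=> /indeterminate_same_mass [nu [same_mass nu_neq]].
apply/eqP => mu0; apply: nu_neq => A mA.
have null (m : {measure set (d.-tuple R) -> \bar R}) :
    m setT = 0%E -> m A = 0%E.
  by move=> m0; apply/eqP; rewrite -measure_le0 -m0 le_measure ?inE.
by rewrite !null // same_mass.
Qed.

(* On R^0, a single point, a measure is determined by its mass. *)
Lemma not_indeterminate_dim0 (R : realType)
    (mu : {measure set (0.-tuple R) -> \bar R}) : ~ indeterminate mu.
Proof.
move=> /indeterminate_same_mass [nu [same_mass nu_neq]]; apply: nu_neq => A _.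
have [[x Ax]|A_empty] := pselect (exists x, A x).
  suff -> : A = setT by [].
  by apply/seteqP; split => // y _; rewrite (tuple0 y) -(tuple0 x).
suff -> : A = set0 by rewrite !measure0.
by apply/seteqP; split => // y Ay; apply: A_empty; exists y.
Qed.

Lemma measurable_horner (dT : measure_display) (T : measurableType dT)
    (R : realType) (p : {poly R}) (f : T -> R) :
  measurable_fun setT f -> measurable_fun setT (fun x => p.[f x]).
Proof. by move=> mf; apply: (measurableT_comp (f := horner p)) => //; exact: measurable_poly. Qed.

Lemma measurable_coord_shift (R : realType) (d : nat) (j : 'I_d) (c : R) :
  measurable_fun setT (fun x : d.-tuple R => tnth x j - c).
Proof. by apply: measurable_funB; [exact: measurable_tnth | exact: measurable_cst]. Qed.

Lemma integral_HI_sum_ge (R : realType) (d : nat) (h : {poly R})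
    (h_ge1 : forall t : R, 0 <= t -> 1 <= h.[t])
    (h_ge0 : forall t : R, 0 <= h.[t])
    (mu : {measure set (d.+1.-tuple R) -> \bar R}) (a : d.+1.-tuple R) :
  (mu setT + \int[mu]_x ((sym_defect h).[tnth x ord0 - tnth a ord0])%:E <=
    \sum_(I : {set 'I_d.+1})
      \int[mu]_x (HI h I (fun j => tnth x j - tnth a j))%:E)%E.
Proof.
have g_meas : measurable_fun setT
    (fun x : d.+1.-tuple R => ((sym_defect h).[tnth x ord0 - tnth a ord0])%:E).
  by apply/measurable_EFinP/measurable_horner; exact: measurable_coord_shift.
have g_ge0 x : setT x -> (0 <= ((sym_defect h).[tnth x ord0 - tnth a ord0])%:E)%E.
  by move=> _; rewrite lee_fin sym_defect_ge0.
have HI_meas (I : {set 'I_d.+1}) : measurable_fun setT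
    (fun x : d.+1.-tuple R => (HI h I (fun j => tnth x j - tnth a j))%:E).
  apply/measurable_EFinP; apply: measurable_prod => j _.
  apply: measurable_horner; apply: measurable_funM; first exact: measurable_cst.
  exact: measurable_coord_shift.
have HI_ge0 I x : setT x -> (0 <= (HI h I (fun j => tnth x j - tnth a j))%:E)%E.
  by move=> _; rewrite lee_fin; apply: prodr_ge0 => j _.
rewrite -ge0_integral_sum // -[mu setT]mul1e -integral_cst // -ge0_integralD //;
  last exact: g_ge0.
apply: ge0_le_integral => //.
- by move=> x _; rewrite adde_ge0 ?lee_fin ?sym_defect_ge0.
- by apply: emeasurable_funD => //; exact: measurable_cst.
- by apply: emeasurable_sum => I.
move=> x _; rewrite sumEFin -EFinD lee_fin.
exact: HI_sum_ge h_ge1 h_ge0 (fun j => tnth x j - tnth a j).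
Qed.

Theorem mainTheorem7 (R : realType) (d : nat) (h : {poly R})
  (h_ge1 : forall t : R, 0 <= t -> 1 <= h.[t])
  (h_ge0 : forall t : R, 0 <= h.[t])
  (mu : {measure set (d.-tuple R) -> \bar R})
  (mu_adm : admissible mu) (mu_ind : indeterminate mu) :
  exists (a : d.-tuple R) (gamma : R), 0 < gamma /\
    (mu setT + gamma%:E <=
      \sum_(I : {set 'I_d})
         \int[mu]_x (HI h I (fun j => tnth x j - tnth a j))%:E)%E.
Proof.
have mu_neq0 := indeterminate_mass_neq0 mu_ind.
case: d mu mu_adm mu_ind mu_neq0 => [|d] mu _ mu_ind mu_neq0.
  by have := not_indeterminate_dim0 mu_ind.
pose g := sym_defect h.
pose shift (k : 'I_(size g).+1) (x : d.+1.-tuple R) := g.[tnth x ord0 - k%:R].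
have shift_meas k : measurable_fun setT (shift k).
  by apply: measurable_horner; exact: measurable_coord_shift.
have shift_ge0 k x : 0 <= shift k x by exact: sym_defect_ge0.
have shift_sum_gt0 x : 0 < \sum_k shift k x.
  exact: sum_shifts_gt0 (sym_defect_neq0 h_ge1) (sym_defect_ge0 h_ge1 h_ge0).
have [k shift_pos] := exists_integral_gt0 mu_neq0 shift_meas shift_ge0 shift_sum_gt0.
have [gamma [gamma_gt0 gamma_le]] := positive_lower_bound shift_pos.
pose a : d.+1.-tuple R := [tuple (k : nat)%:R | j < d.+1].
exists a, gamma; split => //; apply: le_trans (leeD2l _ gamma_le) _.
by have := integral_HI_sum_ge h_ge1 h_ge0 mu a; rewrite tnth_mktuple.
Qed.
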